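(* Let $p:V\to X$ be a smooth map between diffeological spaces, and suppose that each fibre of $p$ has a (real) vector space structure. Then there is a smallest diffeology $\mathcal{D}$ on $V$ which contains the given diffeology on $V$ and which makes $V$ (with $p$ and the given fibrewise vector space structures) into a diffeological vector space over $X$.
   Context: A diffeological space is a set with, for every open subset $U$ of every $\mathbb{R}^n$, a set of maps $U\to X$ called plots, containing constants, closed under precomposition with smooth maps between open subsets of Euclidean spaces, and satisfying the sheaf condition; smooth maps send plots to plots; diffeologies on a set are ordered by inclusion. A diffeological vector space over $X$ is a diffeological space $V$ with a smooth map $p:V\to X$ and a vector space structure on each fibre $p^{-1}(x)$ such that fibrewise addition $V\times_X V\to V$, scalar multiplication $\mathbb{R}\times V\to V$ and the zero section $X\to V$ are smooth, where $\mathbb{R}\times V$ has the product diffeology and $V\times_X V$ the sub-diffeology of $V\times V$. *)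

From HB Require Import structures.
From mathcomp Require Import all_boot all_order all_algebra.
From mathcomp Require Import all_classical all_reals all_analysis.
Set Implicit Arguments. Unset Strict Implicit. Unset Printing Implicit Defensive.
Import Order.TTheory GRing.Theory Num.Theory.
Import numFieldNormedType.Exports.
Local Open Scope classical_set_scope.
Local Open Scope ring_scope.

Section Diffeology.
Variable R : realType.

(** Smooth (C^oo) maps on an open subset U of R^n = 'rV[R]_n:
    every iterated directional derivative exists and is (Frechet)
    differentiable at every point of U. *)
Fixpoint iterD {n : nat} {W : normedModType R} (vs : seq 'rV[R]_n)
  (f : 'rV[R]_n -> W) : 'rV[R]_n -> W :=
  match vs with
  | [::] => f
  | v :: vs' => fun x => derive (iterD vs' f) x v
  end.

Definition smooth_on {n : nat} {W : normedModType R} (U : set 'rV[R]_n)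
  (f : 'rV[R]_n -> W) : Prop :=
  forall (vs : seq 'rV[R]_n) (x : 'rV[R]_n), U x -> differentiable (iterD vs f) x.

Definition smooth_map {m n : nat} (W : set 'rV[R]_m) (U : set 'rV[R]_n)
  (F : {y | W y} -> {x | U x}) : Prop :=
  exists G : 'rV[R]_m -> 'rV[R]_n, smooth_on W G /\ forall y, G (sval y) = sval (F y).

Definition plots (X : Type) :=
  forall (n : nat) (U : set 'rV[R]_n), ({x | U x} -> X) -> Prop.

Definition restr {X : Type} {n : nat} {W U : set 'rV[R]_n} (sWU : W `<=` U)
  (P : {x | U x} -> X) : {x | W x} -> X :=
  fun w => P (exist U (sval w) (sWU (sval w) (proj2_sig w))).

Definition is_diffeology {X : Type} (D : plots X) : Prop :=
  (forall n U P, D n U P -> open U) /\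
  (forall n (U : set 'rV[R]_n) (c : X), open U -> D n U (fun _ => c)) /\
  (forall n (U : set 'rV[R]_n) P, D n U P ->
     forall m (W : set 'rV[R]_m) (F : {y | W y} -> {x | U x}),
       open W -> smooth_map F -> D m W (fun y => P (F y))) /\
  (forall n (U : set 'rV[R]_n) (P : {x | U x} -> X), open U ->
     (forall x, U x -> exists (W : set 'rV[R]_n) (sWU : W `<=` U),
        [/\ open W, W x & D n W (restr sWU P)]) ->
     D n U P).

Definition plots_le {X : Type} (D1 D2 : plots X) : Prop :=
  forall n U P, D1 n U P -> D2 n U P.

Definition smooth {X Y : Type} (DX : plots X) (DY : plots Y) (f : X -> Y) : Prop :=
  forall n U P, DX n U P -> DY n U (fun u => f (P u)).

Definition realD : plots R := fun n U P =>
  open U /\ exists G : 'rV[R]_n -> R^o, smooth_on U G /\ forall y, G (sval y) = P y.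

Definition prodD {X Y : Type} (DX : plots X) (DY : plots Y) : plots (X * Y) :=
  fun n U P => [/\ open U, DX n U (fun u => (P u).1) & DY n U (fun u => (P u).2)].

Definition subD {Z : Type} (DZ : plots Z) (A : Z -> Prop) : plots {z | A z} :=
  fun n U P => DZ n U (fun u => sval (P u)).
Arguments subD {Z} DZ A [n U] _.

(** Fibrewise vector space structure on p : V -> X: each fibre p^-1(x) is put
    in bijection (inj x / prj x) with a real vector space F x. *)
Definition fibre_vs {V X : Type} (p : V -> X) (F : X -> lmodType R)
  (inj : forall x, F x -> V) (prj : forall x, V -> F x) : Prop :=
  [/\ forall x (a : F x), p (inj x a) = x,
      forall x (a : F x), prj x (inj x a) = a
    & forall x v, p v = x -> inj x (prj x v) = v].

Definition fibprod {V X : Type} (p : V -> X) := {vw : V * V | p vw.1 = p vw.2}.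

Definition fib_add {V X : Type} (p : V -> X) (F : X -> lmodType R)
  (inj : forall x, F x -> V) (prj : forall x, V -> F x) (vw : fibprod p) : V :=
  let x := p (sval vw).1 in inj x (prj x (sval vw).1 + prj x (sval vw).2).

Definition fib_scale {V X : Type} (p : V -> X) (F : X -> lmodType R)
  (inj : forall x, F x -> V) (prj : forall x, V -> F x) (av : R * V) : V :=
  let x := p av.2 in inj x (av.1 *: prj x av.2).

Definition zero_section {V X : Type} (F : X -> lmodType R)
  (inj : forall x, F x -> V) (x : X) : V := inj x 0.

Definition is_dvs {V X : Type} (DX : plots X) (D : plots V) (p : V -> X)
  (F : X -> lmodType R) (inj : forall x, F x -> V) (prj : forall x, V -> F x) : Prop :=
  [/\ is_diffeology D,
      smooth D DX p,
      smooth (subD (prodD D D) (fun vw : V * V => p vw.1 = p vw.2)) D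
             (@fib_add _ _ p F inj prj),
      smooth (prodD realD D) D (fib_scale p inj prj)
    & smooth DX D (zero_section inj)].

End Diffeology.

(** The required diffeology is the intersection of all diffeologies that
    contain [DV] and make [V] a diffeological vector space. The family is
    nonempty: the pullback of [DX] along [p] belongs to it, because every
    structure map commutes with [p], so [p] composed with the structure map
    applied to a plot is [p] composed with a component of that plot. The structure maps stay
    smooth because their source diffeologies (products and subsets built
    from [D]) are monotone in [D]. *)

From mathcomp Require Import all_boot all_order all_algebra.
From mathcomp Require Import all_classical all_reals all_analysis.
Import numFieldNormedType.Exports.

Set Implicit Arguments.
Unset Strict Implicit.
Unset Printing Implicit Defensive.

Section Diffeologies.
Variable R : realType.

Definition pullbackD {V X : Type} (p : V -> X) (DX : plots R X) : plots R V :=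
  fun n U P => DX n U (fun u => p (P u)).

Definition meetD {V : Type} (C : plots R V -> Prop) : plots R V :=
  fun n U P => forall D, C D -> D n U P.

Lemma is_diffeology_pullback (V X : Type) (p : V -> X) (DX : plots R X) :
  is_diffeology DX -> is_diffeology (pullbackD p DX).
Proof.
move=> [DXo [DXc [DXs DXsh]]]; split; first by move=> n U P /DXo.
split; first by move=> n U c oU; exact: DXc.
split; first by move=> n U P HP m W G oW sG; exact: DXs HP m W G oW sG.
by move=> n U P oU loc; apply: DXsh.
Qed.

Lemma is_dvs_pullback (V X : Type) (DX : plots R X) (p : V -> X)
    (F : X -> lmodType R) (inj : forall x, F x -> V) (prj : forall x, V -> F x) :
  is_diffeology DX -> (forall x a, p (inj x a) = x) ->
  is_dvs DX (pullbackD p DX) p inj prj.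
Proof.
move=> hX pinj; split; first exact: is_diffeology_pullback.
- by [].
- move=> n U P [_ HP1 _]; rewrite /pullbackD.
  by rewrite (_ : (fun u => _) = fun u => p (sval (P u)).1) //; apply/funext => u; rewrite pinj.
- move=> n U P [_ _ HP2]; rewrite /pullbackD.
  by rewrite (_ : (fun u => _) = fun u => p (P u).2) //; apply/funext => u; rewrite pinj.
- move=> n U P HP; rewrite /pullbackD.
  by rewrite (_ : (fun u => _) = P) //; apply/funext => u; rewrite pinj.
Qed.

Lemma meetD_le (V : Type) (C : plots R V -> Prop) (D : plots R V) :
  C D -> plots_le (meetD C) D.
Proof. by move=> CD n U P HP; exact: HP. Qed.

Lemma le_meetD (V : Type) (C : plots R V -> Prop) (D : plots R V) :
  (forall D', C D' -> plots_le D D') -> plots_le D (meetD C).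
Proof. by move=> le n U P HP D' CD'; exact: le. Qed.

Lemma smooth_meetD (V W : Type) (DW : plots R W) (C : plots R V -> Prop) (f : W -> V) :
  (forall D, C D -> smooth DW D f) -> smooth DW (meetD C) f.
Proof. by move=> sf n U P HP D CD; exact: sf. Qed.

Lemma smooth_le (V W : Type) (DW DW' : plots R W) (DV : plots R V) (f : W -> V) :
  plots_le DW DW' -> smooth DW' DV f -> smooth DW DV f.
Proof. by move=> le sf n U P HP; exact/sf/le. Qed.

Lemma le_prodD (V W : Type) (D1 D1' : plots R V) (D2 D2' : plots R W) :
  plots_le D1 D1' -> plots_le D2 D2' -> plots_le (prodD D1 D2) (prodD D1' D2').
Proof. by move=> le1 le2 n U P [oU H1 H2]; split => //; [exact: le1 | exact: le2]. Qed.

Lemma le_subD (Z : Type) (D D' : plots R Z) (A : Z -> Prop) :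
  plots_le D D' -> plots_le (subD D (A := A)) (subD D' (A := A)).
Proof. by move=> le n U P; exact: le. Qed.

Lemma is_diffeology_meet (V : Type) (C : plots R V -> Prop) (D0 : plots R V) :
  C D0 -> (forall D, C D -> is_diffeology D) -> is_diffeology (meetD C).
Proof.
move=> CD0 diffC; split.
  by move=> n U P HP; have [D0o _] := diffC _ CD0; exact: D0o (HP _ CD0).
split; first by move=> n U c oU D CD; have [_ [Dc _]] := diffC _ CD; exact: Dc.
split.
  move=> n U P HP m W G oW sG D CD; have [_ [_ [Ds _]]] := diffC _ CD.
  exact: Ds (HP _ CD) m W G oW sG.
move=> n U P oU loc D CD; have [_ [_ [_ Dsh]]] := diffC _ CD.
apply: Dsh => // x Ux; have [W [sWU [oW Wx HW]]] := loc x Ux.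
by exists W, sWU; split => //; exact: HW.
Qed.

Lemma is_dvs_meet (V X : Type) (DX : plots R X) (p : V -> X)
    (F : X -> lmodType R) (inj : forall x, F x -> V) (prj : forall x, V -> F x)
    (C : plots R V -> Prop) (D0 : plots R V) :
  C D0 -> (forall D, C D -> is_dvs DX D p inj prj) ->
  is_dvs DX (meetD C) p inj prj.
Proof.
move=> CD0 dvsC; split.
- by apply: is_diffeology_meet CD0 _ => D /dvsC [].
- by apply: smooth_le (meetD_le CD0) _; have [] := dvsC _ CD0.
- apply: smooth_meetD => D CD; have [_ _ addD _ _] := dvsC _ CD.
  exact: smooth_le (le_subD (le_prodD (meetD_le CD) (meetD_le CD))) addD.
- apply: smooth_meetD => D CD; have [_ _ _ scaleD _] := dvsC _ CD.
  by apply: smooth_le scaleD; apply: le_prodD => //; exact: meetD_le.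
- by apply: smooth_meetD => D /dvsC [].
Qed.

End Diffeologies.

Theorem proposition4p6 (R : realType) (V X : Type)
  (DV : plots R V) (DX : plots R X) (p : V -> X)
  (F : X -> lmodType R) (inj : forall x, F x -> V) (prj : forall x, V -> F x) :
  is_diffeology DV -> is_diffeology DX -> smooth DV DX p ->
  fibre_vs p inj prj ->
  exists D : plots R V,
    [/\ plots_le DV D, is_dvs DX D p inj prj &
        forall D' : plots R V, plots_le DV D' -> is_dvs DX D' p inj prj ->
          plots_le D D'].
Proof.
move=> _ hX hp [pinj _ _].
pose C (D : plots R V) := plots_le DV D /\ is_dvs DX D p inj prj.
have C_pullback : C (pullbackD p DX).
  by split; [exact: hp | exact: is_dvs_pullback].
exists (meetD C); split.
- by apply: le_meetD => D [].
- by apply: is_dvs_meet C_pullback _ => D [].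
- by move=> D' leD' dvsD'; exact: meetD_le.
Qed.
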